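(* Let $P$ be (the normalised CFMDP of) a program over label set $\Sigma$, let $\Phi=(\varphi_e,\varphi_f)$ be a specification and let $\beta\in[0,1]$. Suppose there exist PCFAs $Q$ and $A$ over $\Sigma$ satisfying the following three conditions: (i) $\mathcal{L}(P)\subseteq\mathcal{L}(Q)\cup\mathcal{L}(A)$; (ii) for every $\tau\in\mathcal{L}(Q)$ and every state $s\models\varphi_e$, $[\![\tau]\!](s)\not\models\neg\varphi_f$, i.e. the Hoare triple $\{\varphi_e\}\,\tau\,\{\varphi_f\}$ holds; (iii) $\mathbb{P}^{\mathcal{L}}_\Phi(\mathcal{L}(A))\le\beta$. Then $\mathbb{P}_\Phi(P)\le\beta$.
   Context: Labels. $\Sigma$ is a finite label set. It contains probabilistic labels $\mathrm{Pb}_{(i,\mathtt{L})}$ and $\mathrm{Pb}_{(i,\mathtt{R})}$, one pair per identifier $i$ of a fair binary probabilistic choice. The other labels are non-random (set $\Sigma^-$: statements, assume-statements, non-deterministic labels $*_i$). PCFA. A PCFA is a tuple $(L,\Sigma,\delta,\ell_0,\ell_e)$ with $L$ finite, $\delta\subseteq L\times\Sigma\times L$ and unique accepting location $\ell_e$. Its language $\mathcal{L}$ is the set of finite words labelling paths from $\ell_0$ to $\ell_e$. CFMDP and CFMC. A CFMDP is a deterministic PCFA with no transitions out of $\ell_e$. The action of a transition labelled $\sigma\in\Sigma^-$ is $\sigma$, and that of a transition labelled $\mathrm{Pb}_{(i,d)}$ is $i$. A CFMC is a CFMDP in which all transitions out of each location share one action. A CFMDP is normalised if, whenever $\ell\xrightarrow{\mathrm{Pb}_{(i,\mathtt{L})}}\ell_1$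 and $\ell\xrightarrow{\mathrm{Pb}_{(i,\mathtt{R})}}\ell_2$ both exist, $\ell_1\neq\ell_2$. Strategies. $\mathcal{S}(\mathcal{A})$ is the set of finite-memory strategies for $\mathcal{A}$, and $\mathcal{A}^\psi$ is the CFMC obtained by applying $\psi$. Semantics and weight. Labels are interpreted as functions $[\![\sigma]\!]$ on program states, with probabilistic and non-deterministic labels interpreted as the identity. $[\![\sigma_1\cdots\sigma_n]\!]=[\![\sigma_n]\!]\circ\cdots\circ[\![\sigma_1]\!]$. $wt(\tau)=2^{-n}$, where $n$ is the number of probabilistic labels in $\tau$. Violation probabilities. $$\mathbb{P}_\Phi(\mathcal{A})=\sup_{s\models\varphi_e}\sup_{\psi\in\mathcal{S}(\mathcal{A})}\sum_{\tau\in\mathcal{L}(\mathcal{A}^\psi)}wt(\tau)\,[\,[\![\tau]\!](s)\models\neg\varphi_f\,].$$ A set $\Theta\subseteq\Sigma^*$ is mergeable if it equals $\mathcal{L}(\mathcal{M})$ for some CFMC $\mathcal{M}$, and $\mathrm{Mergeable}(\Theta)$ is the set of its mergeable subsets. Then $$\mathbb{P}^{\mathcal{L}}_\Phi(\Theta)=\sup_{s\models\varphi_e}\sup_{\Pi\in\mathrm{Mergeable}(\Theta)}\sum_{\tau\in\Pi}wt(\tau)\,[\,[\![\tau]\!](s)\models\neg\varphi_f\,].$$ *)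

From HB Require Import structures.
From mathcomp Require Import all_boot all_order all_algebra.
From mathcomp Require Import all_classical all_reals.
From mathcomp Require Import ereal topology normedtype sequences esum.

Set Implicit Arguments.
Unset Strict Implicit.
Unset Printing Implicit Defensive.

Import Order.TTheory GRing.Theory Num.Theory.
Local Open Scope classical_set_scope.
Local Open Scope ring_scope.

(* Labels.  [I] : identifiers of fair binary probabilistic choices,   *)
(* [St] : statements and assume-statements, [Nd] : identifiers of      *)
(* non-deterministic labels *_i.  All three are finite, hence so is Σ. *)

Inductive dir := DirL | DirR.

Definition dir_enc (d : dir) : bool := if d is DirL then true else false.
Definition dir_dec (b : bool) : dir := if b then DirL else DirR.
Lemma dir_encK : cancel dir_enc dir_dec. Proof. by case. Qed.
HB.instance Definition _ := Equality.copy dir (can_type dir_encK).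
HB.instance Definition _ := Finite.copy dir (can_type dir_encK).

Section Labels.
Variables (I St Nd : finType).

Inductive label :=
| Pb of I & dir
| Stmt of St
| NDet of Nd.

Definition label_enc (a : label) : (I * dir) + St + Nd :=
  match a with
  | Pb i d => inl (inl (i, d))
  | Stmt s => inl (inr s)
  | NDet n => inr n
  end.
Definition label_dec (x : (I * dir) + St + Nd) : label :=
  match x with
  | inl (inl (i, d)) => Pb i d
  | inl (inr s) => Stmt s
  | inr n => NDet n
  end.
Lemma label_encK : cancel label_enc label_dec. Proof. by case. Qed.
HB.instance Definition _ := Equality.copy label (can_type label_encK).
HB.instance Definition _ := Finite.copy label (can_type label_encK).

Inductive action :=
| ActPb of I
| ActSt of St
| ActND of Nd.

Definition act (a : label) : action :=
  match a with
  | Pb i _ => ActPb i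
  | Stmt s => ActSt s
  | NDet n => ActND n
  end.

Definition is_prob (a : label) : bool := if a is Pb _ _ then true else false.

End Labels.

Arguments Pb {I St Nd} _ _.
Arguments Stmt {I St Nd} _.
Arguments NDet {I St Nd} _.
Arguments ActPb {I St Nd} _.
Arguments ActSt {I St Nd} _.
Arguments ActND {I St Nd} _.
Arguments act {I St Nd} _.
Arguments is_prob {I St Nd} _.

Record PCFA (Sigma : Type) := mkPCFA {
  loc : finType;
  delta : loc -> Sigma -> loc -> Prop;
  init : loc;
  accept : loc }.

Arguments loc {Sigma} _.
Arguments delta {Sigma} _ _ _ _.
Arguments init {Sigma} _.
Arguments accept {Sigma} _.

Unset Implicit Arguments.
Fixpoint run {Sigma} (A : PCFA Sigma) (l : loc A) (w : seq Sigma) (l' : loc A)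
  : Prop :=
  match w with
  | [::] => l = l'
  | a :: w' => exists m, delta A l a m /\ run A m w' l'
  end.

Definition lang {Sigma} (A : PCFA Sigma) : set (seq Sigma) :=
  [set w | run A (init A) w (accept A)].

Set Implicit Arguments.

Section Automata.
Variables (I St Nd : finType).
Local Notation Sigma := (label I St Nd).

Definition deterministic (A : PCFA Sigma) : Prop :=
  forall l a l1 l2, delta A l a l1 -> delta A l a l2 -> l1 = l2.

Definition is_CFMDP (A : PCFA Sigma) : Prop :=
  deterministic A /\ forall a l, ~ delta A (accept A) a l.

Definition is_CFMC (A : PCFA Sigma) : Prop :=
  is_CFMDP A /\
  forall l a1 l1 a2 l2, delta A l a1 l1 -> delta A l a2 l2 -> act a1 = act a2.

Definition normalised (A : PCFA Sigma) : Prop :=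
  forall l i l1 l2, delta A l (Pb i DirL) l1 -> delta A l (Pb i DirR) l2 ->
    l1 <> l2.

Record strategy (A : PCFA Sigma) := mkStrategy {
  mem : finType;
  mem0 : mem;
  choose : loc A -> mem -> action I St Nd;
  update : mem -> loc A -> Sigma -> loc A -> mem;
  choose_enabled : forall l m, (exists a l', delta A l a l') ->
     exists a l', delta A l a l' /\ act a = choose l m }.

Arguments mem {A} _.
Arguments mem0 {A} _.
Arguments choose {A} _ _ _.
Arguments update {A} _ _ _ _ _.

(* The CFMC A^ψ obtained by applying ψ: product of A with the memory of
   ψ; the unique accepting location is [inr tt], which is entered
   whenever A enters ℓe. *)
Definition apply_loc (A : PCFA Sigma) (psi : strategy A) : finType :=
  ((loc A * mem psi) + unit)%type.

Definition apply_delta (A : PCFA Sigma) (psi : strategy A)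
  (x : apply_loc psi) (a : Sigma) (y : apply_loc psi) : Prop :=
  match x, y with
  | inl (l, m), inl (l', m') =>
      [/\ delta A l a l', l' <> accept A, act a = choose psi l m
        & m' = update psi m l a l']
  | inl (l, m), inr _ =>
      delta A l a (accept A) /\ act a = choose psi l m
  | inr _, _ => False
  end.

Definition apply_init (A : PCFA Sigma) (psi : strategy A) : apply_loc psi :=
  if pselect (init A = accept A) then inr tt else inl (init A, mem0 psi).

Definition apply_strategy (A : PCFA Sigma) (psi : strategy A) : PCFA Sigma :=
  @mkPCFA Sigma (apply_loc psi) (@apply_delta A psi) (apply_init psi) (inr tt).

Definition sem_label (S : Type) (semSt : St -> S -> S) (a : Sigma) (s : S) : S :=
  match a with
  | Stmt x => semSt x s
  | _ => s
  end.

Definition sem (S : Type) (semSt : St -> S -> S) (w : seq Sigma) (s : S) : S :=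
  foldl (fun s a => sem_label semSt a s) s w.

Definition wt (R : realType) (w : seq Sigma) : R := (2%:R ^-1) ^+ count is_prob w.

Definition viol_sum (R : realType) (S : Type) (semSt : St -> S -> S)
  (phi_f : set S) (Pi : set (seq Sigma)) (s : S) : \bar R :=
  \esum_(w in Pi) ((wt R w) * ((sem semSt w s) \in ~` phi_f)%:R)%:E.

Definition Pviol (R : realType) (S : Type) (semSt : St -> S -> S)
  (phi_e phi_f : set S) (A : PCFA Sigma) : \bar R :=
  ereal_sup [set x | exists s, exists psi : strategy A,
     phi_e s /\ x = viol_sum R semSt phi_f (lang (apply_strategy psi)) s].

Definition mergeable (Theta : set (seq Sigma)) : Prop :=
  exists M : PCFA Sigma, is_CFMC M /\ lang M = Theta.

Definition PviolL (R : realType) (S : Type) (semSt : St -> S -> S)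
  (phi_e phi_f : set S) (Theta : set (seq Sigma)) : \bar R :=
  ereal_sup [set x | exists s, exists Pi : set (seq Sigma),
     [/\ phi_e s, Pi `<=` Theta, mergeable Pi
       & x = viol_sum R semSt phi_f Pi s]].

End Automata.

From HB Require Import structures.
From mathcomp Require Import all_boot all_order all_algebra.
From mathcomp Require Import all_classical all_reals.
From mathcomp Require Import ereal topology normedtype sequences esum.
Local Open Scope classical_set_scope.
Local Open Scope ring_scope.

Import Order.TTheory GRing.Theory Num.Theory.

(* The CFMC P^psi has its language inside L(P), and by
   (i) and (ii) each of its words that violates the specification lies in
   L(A).  Intersecting P^psi with A (product with the subset automaton of A)
   is again a CFMC, so L(P^psi) ∩ L(A) is a mergeable subset of L(A) carrying
   the whole violation mass of P^psi; by (iii) that mass is at most beta. *)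

Section Intersection.
Variables (Sigma : Type) (B A : PCFA Sigma).

Definition post (X : {set loc A}) (a : Sigma) : {set loc A} :=
  [set l' | `[< exists2 l, l \in X & delta A l a l' >]]%SET.

Lemma postP (X : {set loc A}) a l' :
  reflect (exists2 l, l \in X & delta A l a l') (l' \in post X a).
Proof. rewrite /post inE; exact: asboolP. Qed.

Definition cap_loc : finType := ((loc B * {set loc A}) + unit)%type.

(* [inr tt] is the unique accepting location, entered as soon as B reaches
   its accepting location and A can do so as well. *)
Definition cap_delta (x : cap_loc) (a : Sigma) (y : cap_loc) : Prop :=
  match x, y with
  | inl (b, X), inl (b', Y) => [/\ delta B b a b', b' <> accept B & Y = post X a]
  | inl (b, X), inr _ => delta B b a (accept B) /\ accept A \in post X a
  | inr _, _ => False
  end.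

Definition cap_init : cap_loc :=
  if pselect (init B = accept B /\ init A = accept A) then inr tt
  else inl (init B, [set init A]%SET).

Definition cap_pcfa : PCFA Sigma :=
  @mkPCFA Sigma cap_loc cap_delta cap_init (inr tt).

Lemma run_cap_inr {w y} : run cap_pcfa (inr tt) w y -> w = [::] /\ y = inr tt.
Proof. by case: w => [|a w] /= => [<-|[m []]]. Qed.

Lemma run_cap_accept w b X : run cap_pcfa (inl (b, X)) w (inr tt) ->
  run B b w (accept B) /\ exists2 l, l \in X & run A l w (accept A).
Proof.
elim: w b X => [|a w IH] b X //= [[[b' Y]|[]] [Hd Hr]].
- case: Hd => db _ eY; subst Y; have [rb [l' /postP [l lX dl] rl]] := IH _ _ Hr.
  by split; [exists b' | exists l => //; exists l'].
- case: Hd => db /postP [l lX dl]; have [-> _] := run_cap_inr Hr.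
  by split; [exists (accept B) | exists l => //; exists (accept A)].
Qed.

Hypothesis accept_B_final : forall a l, ~ delta B (accept B) a l.

Lemma run_B_accept_nil {w} : run B (accept B) w (accept B) -> w = [::].
Proof. by case: w => // a w /= [m [/accept_B_final]]. Qed.

Lemma run_accept_cap w b (X : {set loc A}) :
  b <> accept B -> run B b w (accept B) ->
  (exists2 l, l \in X & run A l w (accept A)) -> run cap_pcfa (inl (b, X)) w (inr tt).
Proof.
elim: w b X => [|a w IH] b X /=; first by move=> nb eb; case: (nb eb).
move=> nb [b' [db rb]] [l lX [l' [dl rl]]].
have l'_post : l' \in post X a by apply/postP; exists l.
have [eb|nb'] := pselect (b' = accept B).
- subst b'; move: rl; rewrite (run_B_accept_nil rb) /= => el'.
  by exists (inr tt); split => //; split => //; rewrite -el'.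
- by exists (inl (b', post X a)); split => //; apply: IH => //; exists l'.
Qed.

Lemma lang_cap_pcfa : lang cap_pcfa = lang B `&` lang A.
Proof.
apply/seteqP; split => w; rewrite /lang /= /cap_init;
  case: (pselect (init B = accept B /\ init A = accept A)) => [[eB eA]|ne].
- by move/run_cap_inr => [-> _]; rewrite /= eB eA.
- by move/run_cap_accept => [rb [l]]; rewrite inE => /eqP ->.
- by move=> [wB _] /=; move: wB; rewrite eB => /run_B_accept_nil ->.
- move=> [wB wA] /=; have [eB|nB] := pselect (init B = accept B).
    by move: wB wA; rewrite eB => /run_B_accept_nil -> eA; case: ne.
  by apply: run_accept_cap => //; exists (init A) => //; exact: set11.
Qed.

End Intersection.

Arguments cap_pcfa {Sigma} B A.

Section ControlFlow.
Context {I St Nd : finType}.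
Local Notation Sigma := (label I St Nd).

Lemma cap_pcfa_CFMC (B A : PCFA Sigma) : is_CFMC B -> is_CFMC (cap_pcfa B A).
Proof.
move=> [[detB _] actB]; split; first split.
- move=> [[b X]|[]] a [[b1 X1]|[]] [[b2 X2]|[]] //=.
  + by move=> [d1 _ ->] [d2 _ ->]; rewrite (detB _ _ _ _ d1 d2).
  + by move=> [d1 n1 _] [d2 _]; case: n1; exact: detB d1 d2.
  + by move=> [d1 _] [d2 n2 _]; case: n2; exact: detB d2 d1.
- by move=> a [[? ?]|[]].
- move=> [[b X]|[]] a1 [[b1 X1]|[]] a2 [[b2 X2]|[]] //=.
  + by move=> [d1 _ _] [d2 _ _]; exact: actB d1 d2.
  + by move=> [d1 _ _] [d2 _]; exact: actB d1 d2.
  + by move=> [d1 _] [d2 _ _]; exact: actB d1 d2.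
  + by move=> [d1 _] [d2 _]; exact: actB d1 d2.
Qed.

Lemma mergeable_lang_capl (B A : PCFA Sigma) :
  is_CFMC B -> mergeable (lang B `&` lang A).
Proof.
move=> CB; exists (cap_pcfa B A); split; first exact: cap_pcfa_CFMC.
by apply: lang_cap_pcfa; case: CB => [[_ noB] _].
Qed.

Lemma apply_strategy_CFMC (P : PCFA Sigma) (psi : strategy P) :
  is_CFMDP P -> is_CFMC (apply_strategy psi).
Proof.
move=> [detP _]; split; first split.
- move=> [[l m]|[]] a [[l1 m1]|[]] [[l2 m2]|[]] //=.
  + by move=> [d1 _ _ ->] [d2 _ _ ->]; rewrite (detP _ _ _ _ d1 d2).
  + by move=> [d1 n1 _ _] [d2 _]; case: n1; exact: detP d1 d2.
  + by move=> [d1 _] [d2 n2 _ _]; case: n2; exact: detP d2 d1.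
- by move=> a [[? ?]|[]].
- move=> [[l m]|[]] a1 [[l1 m1]|[]] a2 [[l2 m2]|[]] //=.
  + by move=> [_ _ -> _] [_ _ -> _].
  + by move=> [_ _ -> _] [_ ->].
  + by move=> [_ ->] [_ _ -> _].
  + by move=> [_ ->] [_ ->].
Qed.

Lemma lang_apply_strategy_sub {P : PCFA Sigma} (psi : strategy P) :
  lang (apply_strategy psi) `<=` lang P.
Proof.
have run_inr w y : run (apply_strategy psi) (inr tt) w y -> w = [::].
  by case: w => [|a w] //= [? []].
have run_inl w l m : run (apply_strategy psi) (inl (l, m)) w (inr tt) ->
    run P l w (accept P).
  elim: w l m => [|a w IH] l m //= [[[l' m']|[]] [Hd Hr]].
  - by case: Hd => d _ _ _; exists l'; split => //; exact: IH Hr.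
  - by case: Hd => d _; exists (accept P); rewrite (run_inr _ _ Hr).
move=> w; rewrite /lang /= /apply_init.
case: (pselect (init P = accept P)) => [e|_] /=; last exact: run_inl.
by move/run_inr => ->; rewrite /= e.
Qed.

Lemma viol_sum_le (R : realType) (S : Type) (semSt : St -> S -> S)
    (phi_f : set S) (Pi1 Pi2 : set (seq Sigma)) (s : S) :
  (forall w, Pi1 w -> ~ phi_f (sem semSt w s) -> Pi2 w) ->
  (viol_sum R semSt phi_f Pi1 s <= viol_sum R semSt phi_f Pi2 s)%E.
Proof.
move=> viol_in.
rewrite /viol_sum (esum_mkcond Pi1) (esum_mkcond Pi2); apply: le_esum => w _.
have wt_ge0 : 0 <= wt R w by rewrite exprn_ge0 // invr_ge0.
have term_ge0 (b : bool) : (0 <= (wt R w * b%:R)%:E)%E by rewrite lee_fin mulr_ge0.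
case: (boolP (w \in Pi1)) => w1; last by case: ifP.
case: (boolP (sem semSt w s \in ~` phi_f)) => [|_]; last by rewrite mulr0; case: ifP.
rewrite inE => viol; have -> // : w \in Pi2 by apply/mem_set/viol_in/viol/set_mem.
Qed.

End ControlFlow.

Theorem mainTheorem5 (R : realType) (I St Nd : finType) (S : Type)
  (semSt : St -> S -> S) (phi_e phi_f : set S)
  (P : PCFA (label I St Nd)) (beta : R) :
  is_CFMDP P -> normalised P ->
  0 <= beta <= 1 ->
  (exists Q A : PCFA (label I St Nd),
     [/\ lang P `<=` lang Q `|` lang A,
         (forall w s, lang Q w -> phi_e s -> phi_f (sem semSt w s))
       & (PviolL R semSt phi_e phi_f (lang A) <= beta%:E)%E]) ->
  (Pviol R semSt phi_e phi_f P <= beta%:E)%E.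
Proof.
move=> HP _ _ [Q [A [cover safeQ HA]]].
apply/ereal_supP => _ [s [psi [Hs ->]]].
set B := apply_strategy psi.
have violations_in_cap : forall w, lang B w -> ~ phi_f (sem semSt w s) ->
    (lang B `&` lang A) w.
  move=> w wB viol; split => //.
  by case: (cover w (lang_apply_strategy_sub psi w wB)) => // /safeQ /(_ Hs).
apply: le_trans (viol_sum_le R S semSt phi_f _ _ s violations_in_cap) _.
apply: le_trans HA.
apply: ereal_sup_ubound; exists s, (lang B `&` lang A); split => //.
by apply: mergeable_lang_capl; apply: apply_strategy_CFMC.
Qed.
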